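(* There exist absolute constants $\lambda,C>0$ with the following property. Let $t\ge 1$, let $w_1,\dots,w_t>0$ be fixed weights, and let $W=\sum_{i=1}^t w_i$. Fix $\ell\in[t]$ and assume $w_i\le\frac{1}{2\ell}W$ for all $i\in[t]$. Let $t_1,\dots,t_t$ be i.i.d. exponential random variables with rate $1$, and set $v_i=w_i/t_i$. Let $D(1),\dots,D(t)$ be the anti-ranks, i.e. the random indices with $v_{D(1)}\ge v_{D(2)}\ge\dots\ge v_{D(t)}$. Then for every $c\ge 1/2$, $$\Pr\!\left[v_{D(\ell)}\le\frac{W}{c\,\ell}\right]\le\lambda e^{-Cc}.$$
   Context: An exponential random variable with rate $1$ has density $e^{-x}$ for $x\ge 0$. The anti-ranks are almost surely uniquely defined. *)

From HB Require Import structures.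
From mathcomp Require Import all_boot all_order all_algebra.
From mathcomp Require Import all_classical all_reals all_analysis.
Set Implicit Arguments. Unset Strict Implicit. Unset Printing Implicit Defensive.
Import Order.TTheory GRing.Theory Num.Theory.
Local Open Scope classical_set_scope.
Local Open Scope ring_scope.

(* Mutual independence of a finite family of real random variables:
   the product rule for every choice of Borel sets (taking B i = setT
   recovers every subfamily). *)
Definition mutually_independent d (T : measurableType d) (R : realType)
    (P : probability T R) (t : nat) (X : 'I_t -> {RV P >-> R}) : Prop :=
  forall B : 'I_t -> set R, (forall i, measurable (B i)) ->
    P (\bigcap_(i in [set: 'I_t]) (X i @^-1` B i)) =
    (\prod_(i < t) P (X i @^-1` B i))%E.

Definition is_exponential1 d (T : measurableType d) (R : realType)
    (P : probability T R) (X : {RV P >-> R}) : Prop :=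
  forall A : set R, measurable A -> distribution P X A = exponential_prob 1 A.

(* k-th largest value (k >= 1) of v : 'I_t -> R, i.e. v_{D(k)} where D are
   the anti-ranks: the (k-1)-th entry of the values sorted non-increasingly. *)
Definition kth_largest (R : realType) (t : nat) (v : 'I_t -> R) (k : nat) : R :=
  nth 0 (sort (fun x y : R => y <= x) [seq v i | i <- enum 'I_t]) k.-1.

From HB Require Import structures.
From mathcomp Require Import all_boot all_order all_algebra.
From mathcomp Require Import all_classical all_reals all_analysis.
From mathcomp Require Import ring lra.
Set Implicit Arguments. Unset Strict Implicit. Unset Printing Implicit Defensive.
Import Order.TTheory GRing.Theory Num.Theory.
Local Open Scope classical_set_scope.
Local Open Scope ring_scope.

(* Put a := W / (c l) and x_i := w_i / a, so that sum_i x_i = c l and x_i <= c/2.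
   The event v_D(l) <= a says that at most l - 1 of the independent events
   {t_i < x_i}, of probabilities 1 - e^{-x_i}, occur. A Chernoff bound with
   parameter q = e^{-c/2} bounds its probability by
   q^{-(l-1)} prod_i (e^{-x_i} + q (1 - e^{-x_i})); since x |-> e^{-x} + q (1 - e^{-x})
   is log-convex, each factor is at most (2q)^{2 x_i / c}, whence the bound
   q^{-(l-1)} (2q)^{2l} <= q = e^{-c/2} as soon as c >= 4. For c <= 4 the
   trivial bound 1 <= e^{2 - c/2} suffices, so lambda = e^2 and C = 1/2 work. *)

Lemma lt_nth_sorted_ge (R : realDomainType) (s : seq R) (a : R) k :
  sorted (fun x y => y <= x) s -> (k < size s)%N ->
  (a < nth 0 s k) = (k < count (fun x => (a < x)%R) s)%N.
Proof.
elim: s k => [//|y s IH] k /= s_sorted k_lt.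
have {}IH := IH _ (path_sorted s_sorted).
have s_le_y : all (fun x => x <= y) s.
  by apply: order_path_min s_sorted => x1 x2 x3 h12 h23; exact: le_trans h23 h12.
have [a_lt_y|y_le_a] := ltP a y.
  by case: k k_lt => [|k] k_lt /=; [exact: a_lt_y | rewrite IH // add1n].
have count0 : count (fun x => (a < x)%R) s = 0%N.
  apply/eqP; rewrite -leqn0 leqNgt -has_count; apply/hasPn => x xs.
  by rewrite -leNgt (le_trans (allP s_le_y x xs)).
case: k k_lt => [|k] k_lt /=; rewrite count0 add0n ltn0.
  by rewrite ltNge y_le_a.
by rewrite IH // count0.
Qed.

Lemma kth_largest_leE (R : realType) t (v : 'I_t -> R) l a :
  (1 <= l <= t)%N ->
  (kth_largest v l <= a) = (count (fun i => (a < v i)%R) (enum 'I_t) <= l.-1)%N.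
Proof.
case: l => // l /andP[_ l_le].
rewrite /kth_largest leNgt lt_nth_sorted_ge ?sort_sorted //.
- by rewrite count_sort count_map -leqNgt.
- by move=> x y; exact: le_total.
- by rewrite size_sort size_map size_enum_ord.
Qed.

Lemma prodr_if_count (R : pzSemiRingType) t (f : 'I_t -> bool) (q : R) :
  \prod_(i < t) (if f i then q else 1) = q ^+ count f (enum 'I_t).
Proof. by rewrite -big_mkcond prodr_const cardE /enum_mem size_filter filter_predT. Qed.

Definition poibin_cdf (R : pzRingType) t (p : 'I_t -> R) k : R :=
  \sum_(f : {ffun 'I_t -> bool} | (count f (enum 'I_t) <= k)%N)
     \prod_(i < t) (if f i then p i else 1 - p i).

(* The Chernoff bound: [q ^+ count f] weighs down the outcomes [f] with many
   successes, and the weighted sum over all outcomes factorizes. *)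
Lemma poibin_cdf_le (R : numFieldType) t (p : 'I_t -> R) k (q : R) :
  (forall i, 0 <= p i <= 1) -> 0 < q <= 1 ->
  poibin_cdf p k <= (q ^+ k)^-1 * \prod_(i < t) (1 - p i + q * p i).
Proof.
move=> p01 /andP[q_gt0 q_le1].
pose g i (b : bool) := if b then p i else 1 - p i.
have prod_g_ge0 (f : {ffun 'I_t -> bool}) : 0 <= \prod_(i < t) g i (f i).
  apply: prodr_ge0 => i _; have := p01 i.
  by rewrite /g; case: (f i); rewrite ?subr_ge0 => /andP[].
have -> : \prod_(i < t) (1 - p i + q * p i) =
    \sum_(f : {ffun 'I_t -> bool}) q ^+ count f (enum 'I_t) * \prod_(i < t) g i (f i).
  rewrite (eq_bigr (fun i => \sum_(b : bool) (if b then q else 1) * g i b)).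
    by rewrite bigA_distr_bigA; apply: eq_bigr => f _; rewrite big_split prodr_if_count.
  by move=> i _; rewrite big_bool /= mul1r addrC.
rewrite mulr_sumr [leRHS](bigID (fun f : {ffun _} => count f (enum 'I_t) <= k)%N) /=.
rewrite -[leLHS]addr0; apply: lerD.
  apply: ler_sum => f f_le; rewrite mulrA -[leLHS]mul1r.
  apply: ler_wpM2r; first exact: prod_g_ge0.
  rewrite -(subnKC f_le) exprD invfM mulrAC.
  rewrite mulVf ?expf_neq0 ?gt_eqF // mul1r invf_ge1 ?exprn_gt0 //.
  by rewrite exprn_ile1 // ltW.
by apply: sumr_ge0 => f _; rewrite !mulr_ge0 ?prod_g_ge0 ?invr_ge0 ?exprn_ge0 ?ltW.
Qed.

Lemma poibin_cdf_le1 (R : numFieldType) t (p : 'I_t -> R) k :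
  (forall i, 0 <= p i <= 1) -> poibin_cdf p k <= 1.
Proof.
move=> p01; apply: le_trans (poibin_cdf_le k p01 (_ : 0 < 1 <= 1)) _.
  by rewrite ltr01 lexx.
by rewrite expr1n invr1 mul1r big1 // => i _; rewrite mul1r subrK.
Qed.

Lemma le_measure_bigsetU d (T : ringOfSetsType d) (R : realFieldType)
    (mu : {content set T -> \bar R}) (I : Type) (s : seq I) (p : pred I)
    (F : I -> set T) :
  (forall i, p i -> measurable (F i)) ->
  (mu (\big[setU/set0]_(i <- s | p i) F i) <= \sum_(i <- s | p i) mu (F i))%E.
Proof.
move=> mF; elim: s => [|i s IH]; first by rewrite !big_nil measure0.
rewrite !big_cons; case: ifP => // p_i.
apply: le_trans (measureU2 mu (mF _ p_i) (bigsetU_measurable _ mF)) _.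
exact: leeD.
Qed.

Lemma prob_count_mem_le d (T : measurableType d) (R : realType)
    (P : probability T R) t (X : 'I_t -> {RV P >-> R}) (A : 'I_t -> set R)
    (p : 'I_t -> R) k :
  mutually_independent X -> (forall i, measurable (A i)) ->
  (forall i, P (X i @^-1` A i) = (p i)%:E) ->
  (P [set om | (count (fun i => X i om \in A i) (enum 'I_t) <= k)%N] <=
   (poibin_cdf p k)%:E)%E.
Proof.
move=> indep mA PA.
pose B (f : {ffun 'I_t -> bool}) i := if f i then A i else ~` A i.
have mB f i : measurable (B f i) by rewrite /B; case: (f i) => //; exact: measurableC.
pose E f := \bigcap_(i in [set: 'I_t]) (X i @^-1` B f i).
have mE f : measurable (E f).
  apply: fin_bigcap_measurable; first exact: finite_finset.
  by move=> i _; exact: measurable_funPTI.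
have PE f : P (E f) = (\prod_(i < t) (if f i then p i else 1 - p i))%:E.
  rewrite /E indep // -prodEFin; apply: eq_bigr => i _; rewrite /B.
  case: (f i) => //; rewrite -preimage_setC probability_setC ?PA //.
  exact: measurable_funPTI.
have -> : [set om | (count (fun i => X i om \in A i) (enum 'I_t) <= k)%N] =
    \big[setU/set0]_(f <- index_enum {ffun 'I_t -> bool} |
                     (count f (enum 'I_t) <= k)%N) E f.
  rewrite -bigcup_seq_cond; apply/seteqP; split => om /=.
    move=> count_le; exists [ffun i => X i om \in A i].
      rewrite /= mem_index_enum (eq_count (a2 := fun i => X i om \in A i)) //.
      by move=> i; rewrite ffunE.
    move=> i _; rewrite /B /= ffunE.
    by case: ifP => [/set_mem // | /negbT/negP notA /mem_set/notA].
  move=> [f /andP[_ count_le] Ef]; rewrite (eq_count (a2 := f)) // => i.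
  have := Ef i I; rewrite /B /=; case: (f i) => [/mem_set // | notA].
  by apply/negbTE/negP => /set_mem.
apply: le_trans (le_measure_bigsetU P _ (fun f _ => mE f)) _.
by rewrite (eq_bigr _ (fun f _ => PE f)) sumEFin.
Qed.

Lemma exponential_prob1_itv0o (R : realType) (x : R) : 0 < x ->
  exponential_prob 1 `]0, x[%classic = (1 - expR (- x))%:E.
Proof.
move=> x_gt0.
rewrite EFinB -(mulN1r x) -exponential_prob_itv0c //.
rewrite -(setUitv_set2 false true (ltW x_gt0)).
rewrite measureU //=; last 2 first.
- by apply: measurableU; exact: measurable_set1.
- apply/seteqP; split => z //=; rewrite in_itv /= => -[/andP[z_gt0 z_lt] [] z_eq].
    by rewrite z_eq ltxx in z_gt0.
  by rewrite z_eq ltxx in z_lt.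
rewrite (_ : exponential_prob 1 [set 0; x] = 0%E) ?adde0 //.
apply/eqP; rewrite -measure_le0; apply: le_trans (measureU2 _ _ _) _ => //.
rewrite (_ : _ [set 0] = 0%E); last exact: integral_set1.
by rewrite (_ : _ [set x] = 0%E) ?adde0 //; exact: integral_set1.
Qed.

Lemma kth_largest_le_prob_le (R : realType) t (w : 'I_t -> R) l (a : R)
    d (T : measurableType d) (P : probability T R) (X : 'I_t -> {RV P >-> R}) :
  (forall i, 0 < w i) -> (1 <= l <= t)%N -> 0 < a ->
  mutually_independent X -> (forall i, is_exponential1 (X i)) ->
  (P [set om | (kth_largest (fun i => w i / X i om) l <= a)%R] <=
   (poibin_cdf (fun i => 1 - expR (- (w i / a))) l.-1)%:E)%E.
Proof.
move=> w_gt0 l_bd a_gt0 indep expo.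
pose A i : set R := `]0, w i / a[%classic.
have exceeds_iff om i : (a < w i / X i om) = (X i om \in A i).
  rewrite mem_setE in_itv /=; have [X_gt0|X_le0] := ltP 0 (X i om).
    by rewrite ltr_pdivlMr // mulrC -ltr_pdivlMr.
  apply/negbTE; rewrite -leNgt (le_trans _ (ltW a_gt0)) //.
  by apply: mulr_ge0_le0; rewrite ?invr_le0 // ltW.
have -> : [set om | (kth_largest (fun i => w i / X i om) l <= a)%R] =
    [set om | (count (fun i => X i om \in A i) (enum 'I_t) <= l.-1)%N].
  by apply/funext => om /=; rewrite kth_largest_leE // (eq_count (exceeds_iff om)).
apply: prob_count_mem_le indep _ _ => [i|i]; first exact: measurable_itv.
rewrite -exponential_prob1_itv0o ?divr_gt0 //; exact: (expo i _ (measurable_itv _)).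
Qed.

Lemma convex_expR_le (R : realType) (th a b : R) : 0 <= th <= 1 ->
  expR (th * a + (1 - th) * b) <= th * expR a + (1 - th) * expR b.
Proof.
case/andP=> th_ge0 th_le1.
by have := convex_expR (Itv01 th_ge0 th_le1) a b; rewrite !convRE.
Qed.

(* Concavity of [u |-> u ^ th] (with [u = expR (- y)]): each of the two terms is
   bounded by a weighted AM-GM inequality whose right-hand sides add up to 1. *)
Lemma mixture_expR_concave (R : realType) (A B y th : R) :
  0 < A -> 0 < B -> A + B = 1 -> 0 <= th <= 1 ->
  A * expR (- (th * y)) + B <= expR (th * ln (A * expR (- y) + B)).
Proof.
move=> A_gt0 B_gt0 AB th01.
set U := A * expR (- y) + B; set L := ln U.
have U_gt0 : 0 < U by rewrite addr_gt0 // mulr_gt0 // expR_gt0.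
have eU : expR L = U by rewrite lnK // posrE.
have amgm (C c : R) : 0 < C -> C * expR (- (th * c)) <=
    expR (th * L) * (th * (C * expR (- c) / U) + (1 - th) * C).
  move=> C_gt0; have eC : expR (ln C) = C by rewrite lnK // posrE.
  have -> : C * expR (- (th * c)) =
      expR (th * L) * expR (th * (ln C - c - L) + (1 - th) * ln C).
    by rewrite -expRD -[in LHS]eC -expRD; congr expR; ring.
  rewrite ler_pM2l ?expR_gt0 //; apply: le_trans (convex_expR_le _ _ th01) _.
  by rewrite expRB expRD eC eU.
have := lerD (amgm A y A_gt0) (amgm B 0 B_gt0).
rewrite mulr0 oppr0 expR0 !mulr1 -mulrDr => /le_trans; apply.
rewrite ler_piMr ?expR_ge0 //.
have -> : th * (A * expR (- y) / U) + (1 - th) * A + (th * (B / U) + (1 - th) * B)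
   = th * (U / U) + (1 - th) * (A + B) by rewrite /U; field; rewrite gt_eqF.
by rewrite divff ?gt_eqF // AB !mulr1 subrKC.
Qed.

Lemma tilted_factor_le (R : realType) (m x : R) : 0 < m -> 0 <= x <= m ->
  expR (- x) + expR (- m) * (1 - expR (- x)) <= expR (x / m * ln (2 * expR (- m))).
Proof.
move=> m_gt0 /andP[x_ge0 x_le_m]; set q := expR (- m).
have q_gt0 : 0 < q by exact: expR_gt0.
have q_lt1 : q < 1 by rewrite expR_lt1 oppr_lt0.
have th01 : 0 <= x / m <= 1.
  by rewrite divr_ge0 ?(ltW m_gt0) //= ler_pdivrMr // mul1r.
have := mixture_expR_concave m _ q_gt0 _ th01.
move=> /(_ (1 - q)); rewrite subr_gt0 divfK ?gt_eqF // subrK => /(_ q_lt1 erefl) mix.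
have -> : expR (- x) + q * (1 - expR (- x)) = (1 - q) * expR (- x) + q by ring.
apply: le_trans mix _; rewrite ler_expR ler_wpM2l ?(andP th01).1 // -/q.
rewrite ler_ln ?posrE ?mulr_gt0 ?addr_gt0 ?subr_gt0 //; nra.
Qed.

Lemma prod_tilted_factor_le (R : realType) t (x : 'I_t -> R) m :
  0 < m -> (forall i, 0 <= x i <= m) ->
  \prod_(i < t) (expR (- x i) + expR (- m) * (1 - expR (- x i)))
  <= expR ((\sum_(i < t) x i) / m * ln (2 * expR (- m))).
Proof.
move=> m_gt0 x_bd; rewrite !mulr_suml expR_sum; apply: ler_prod => i _.
have [x_ge0 _] := andP (x_bd i).
rewrite tilted_factor_le // andbT addr_ge0 ?expR_ge0 // mulr_ge0 ?expR_ge0 //.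
by rewrite subr_ge0 expR_le1 oppr_le0.
Qed.

Lemma chernoff_exponent_le (R : realFieldType) (q : R) l :
  (0 < l)%N -> 0 < q -> 4 * q <= 1 -> (q ^+ l.-1)^-1 * (2 * q) ^+ (2 * l) <= q.
Proof.
case: l => // k _ q_gt0 q_le.
have -> : (2 * q) ^+ (2 * k.+1) = (4 * q) ^+ k.+1 * q * q ^+ k.
  by rewrite exprM (_ : (2 * q) ^+ 2 = 4 * q * q) ?exprMn -?mulrA -?exprS; ring.
rewrite mulrC -!mulrA mulfV ?expf_neq0 ?gt_eqF // mulr1.
by apply: ler_piMl; [exact: ltW | apply: exprn_ile1; rewrite // mulr_ge0 // ltW].
Qed.

Lemma poibin_cdf_expR_le (R : realType) t (x : 'I_t -> R) l m :
  (0 < l)%N -> 2 <= m -> (forall i, 0 <= x i <= m) ->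
  \sum_(i < t) x i = 2 * l%:R * m ->
  poibin_cdf (fun i => 1 - expR (- x i)) l.-1 <= expR (- m).
Proof.
move=> l_gt0 m_ge2 x_bd x_sum; set q := expR (- m).
have m_gt0 : 0 < m by apply: lt_le_trans m_ge2.
have q_gt0 : 0 < q by exact: expR_gt0.
have q_le1 : q <= 1 by rewrite expR_le1 oppr_le0 ltW.
have four_q : 4 * q <= 1.
  have e2_ge4 : 4 <= expR 2 :> R.
    have := expR_ge1Dx (1 : R); rewrite (_ : 2 = 1 + 1 :> R) // expRD => e_ge2; nra.
  apply: le_trans (_ : expR 2 * q <= 1); first by apply: ler_wpM2r => //; exact: ltW.
  by rewrite -expRD expR_le1 subr_le0.
have p01 i : 0 <= 1 - expR (- x i) <= 1.
  by rewrite gerBl expR_ge0 subr_ge0 expR_le1 oppr_le0 (andP (x_bd i)).1.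
apply: le_trans (poibin_cdf_le l.-1 p01 (_ : 0 < q <= 1)) _; first by rewrite q_gt0.
apply: le_trans (chernoff_exponent_le l_gt0 q_gt0 four_q).
apply: ler_wpM2l; first by rewrite invr_ge0 exprn_ge0 // ltW.
under eq_bigr do rewrite subKr.
apply: le_trans (prod_tilted_factor_le m_gt0 x_bd) _.
rewrite x_sum mulfK ?gt_eqF // -natrM expRM_natl lnK // posrE.
by rewrite mulr_gt0.
Qed.

Theorem proposition3p3 (R : realType) :
  exists lambda C : R, 0 < lambda /\ 0 < C /\
  forall (t : nat) (w : 'I_t -> R) (l : nat),
    (1 <= t)%N ->
    (forall i, 0 < w i) ->
    (1 <= l <= t)%N ->
    (forall i, w i <= (\sum_(j < t) w j) / (2 * l%:R)) ->
    forall (d : measure_display) (T : measurableType d) (P : probability T R)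
           (X : 'I_t -> {RV P >-> R}),
    mutually_independent X ->
    (forall i, is_exponential1 (X i)) ->
    forall c : R, 1 / 2 <= c ->
      (P [set om | (kth_largest (fun i => w i / X i om) l
                     <= (\sum_(j < t) w j) / (c * l%:R))%R]
        <= (lambda * expR (- (C * c)))%:E)%E.
Proof.
exists (expR 2), (1 / 2); split; first exact: expR_gt0.
split=> // t w l t_ge1 w_gt0 l_bd w_le d T P X indep expo c c_ge.
set W := \sum_(j < t) w j; set a := W / (c * l%:R).
have l_gt0 : (0 < l)%N by case/andP: l_bd.
have [c_gt0 l_gt0R] : 0 < c /\ 0 < l%:R :> R by split; [lra | rewrite ltr0n].
have W_gt0 : 0 < W.
  rewrite /W (bigD1 (Ordinal t_ge1)) //= ltr_pwDl ?w_gt0 ?sumr_ge0 // => i _.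
  exact: ltW.
have a_gt0 : 0 < a by rewrite divr_gt0 ?mulr_gt0.
have x_ge0 i : 0 <= w i / a by rewrite divr_ge0 ?(ltW (w_gt0 i)) ?(ltW a_gt0).
apply: le_trans (kth_largest_le_prob_le w_gt0 l_bd a_gt0 indep expo) _.
rewrite lee_fin -expRD; have [c_le4|c_gt4] := lerP c 4.
  apply: le_trans (poibin_cdf_le1 _ _) _ => [i|].
    by rewrite gerBl expR_ge0 subr_ge0 expR_le1 oppr_le0 x_ge0.
  by rewrite -[leLHS]expR0 ler_expR; lra.
apply: le_trans (@poibin_cdf_expR_le _ _ _ l (c / 2) l_gt0 _ _ _) _.
- lra.
- move=> i; rewrite x_ge0 ler_pdivrMr //.
  by rewrite (_ : c / 2 * a = W / (2 * l%:R)) ?w_le // /a; field; rewrite !gt_eqF.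
- by rewrite -mulr_suml -/W /a; field; rewrite !gt_eqF.
by rewrite ler_expR; lra.
Qed.
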